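(* Let $Q$ be a Jordan loop and $x\in Q$. Then (i) $(x^2)^{-1}x=x^{-1}$; (ii) $x^3x^{-2}=x$; (iii) $x^3x^{-1}=x^2$; (iv) $x^4(x^{-1})^3=x$; (v) $x^6x^{-2}=x^4$; (vi) $x^6x^{-4}=x^2$.
   Context: A loop is a set $Q$ with a binary operation (juxtaposition) and neutral element $e$ such that for all $a,b$ the equations $ax=b$, $ya=b$ have unique solutions. A Jordan loop is a commutative loop satisfying $x^2(yx)=(x^2y)x$. For $y\in Q$ and $k\ge 0$, $y^k$ denotes the right-associated product $y(y(\cdots(ye)\cdots))$ with $k$ factors $y$. Each $x$ has a unique two-sided inverse $x^{-1}$, and for $k\ge 1$, $x^{-k}$ denotes $(x^{-1})^k$. *)

From Stdlib Require Import Arith.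

Record is_loop {Q : Type} (op : Q -> Q -> Q) (e : Q) : Prop := {
  loop_left_id  : forall x, op e x = x;
  loop_right_id : forall x, op x e = x;
  loop_ldiv : forall a b, exists x, op a x = b /\ forall x', op a x' = b -> x' = x;
  loop_rdiv : forall a b, exists y, op y a = b /\ forall y', op y' a = b -> y' = y
}.

Record is_jordan_loop {Q : Type} (op : Q -> Q -> Q) (e : Q) : Prop := {
  jl_loop : is_loop op e;
  jl_comm : forall x y, op x y = op y x;
  jl_jordan : forall x y, op (op x x) (op y x) = op (op (op x x) y) x
}.

Fixpoint lpow {Q : Type} (op : Q -> Q -> Q) (e : Q) (y : Q) (k : nat) : Q :=
  match k with
  | O => e
  | S k' => op y (lpow op e y k')
  end.


(* Everything follows from the left-multiplication form of the Jordan identity,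
   [x^2 (x y) = x (x^2 y)], together with cancellation of left multiplication.
   Taking [y = x] gives power-associativity up to degree 6
   ([x^4 = (x^2)^2], [x^6 = (x^2)^3]); taking [y = x^{-1}] gives
   [x^2 x^{-1} = x], hence [(x^2)^{-1} = x^{-2}], and then successively the
   identities for [x^4] and [x^3] against [x^{-1}] and [x^{-2}].  Items (v)
   and (vi) are items (iii) and (ii) for the pair [x^2], [x^{-2}]. *)

Section JordanLoop.

Variables (Q : Type) (op : Q -> Q -> Q) (e : Q).
Hypothesis HQ : is_jordan_loop op e.

Local Notation pow := (lpow op e).

Let mulC : forall x y, op x y = op y x := jl_comm _ _ HQ.
Let mul1r : forall x, op x e = x := loop_right_id _ _ (jl_loop _ _ HQ).

Lemma mulI u y1 y2 : op u y1 = op u y2 -> y1 = y2.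
Proof.
  intro H.
  destruct (loop_ldiv _ _ (jl_loop _ _ HQ) u (op u y1)) as [z [_ Uz]].
  now rewrite (Uz y1 eq_refl), (Uz y2 (eq_sym H)).
Qed.

Lemma jordan_mul_left u y : op (op u u) (op u y) = op u (op (op u u) y).
Proof. rewrite (mulC u y), (jl_jordan _ _ HQ). apply mulC. Qed.

Lemma pow2E x : pow x 2 = op x x.
Proof. simpl. now rewrite mul1r. Qed.

Lemma pow3E x : pow x 3 = op x (pow x 2).
Proof. reflexivity. Qed.

Lemma pow4_pow2 x : pow x 4 = pow (pow x 2) 2.
Proof.
  change (op x (op x (pow x 2)) = pow (pow x 2) 2).
  rewrite !pow2E, (mulC x (op x x)). symmetry. apply jordan_mul_left.
Qed.

Lemma pow5E x : pow x 5 = op (pow x 2) (pow x 3).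
Proof.
  change (op x (pow x 4) = op (pow x 2) (pow x 3)).
  rewrite pow4_pow2, pow3E, !pow2E. symmetry. apply jordan_mul_left.
Qed.

Lemma pow6_pow2 x : pow x 6 = pow (pow x 2) 3.
Proof.
  change (op x (pow x 5) = op (pow x 2) (pow (pow x 2) 2)).
  rewrite pow5E, <- pow4_pow2, pow3E, pow2E, <- jordan_mul_left, <- pow2E.
  reflexivity.
Qed.

Lemma pow2_mul_inv x a : op x a = e -> op (pow x 2) a = x.
Proof.
  intro xa. apply (mulI x). pose proof (jordan_mul_left x a) as J.
  rewrite xa, mul1r in J. now rewrite pow2E, <- J.
Qed.

Lemma pow2_mul_pow2_inv x a : op x a = e -> op (pow x 2) (pow a 2) = e.
Proof.
  intro xa. assert (ax : op a x = e) by now rewrite mulC.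
  apply (mulI x).
  rewrite mul1r, (pow2E x), <- jordan_mul_left, (mulC x (pow a 2)).
  now rewrite (pow2_mul_inv a x ax), <- (pow2E x), (pow2_mul_inv x a xa).
Qed.

Lemma pow4_mul_inv x a : op x a = e -> op (pow x 4) a = pow x 3.
Proof.
  intro xa. apply (mulI (pow x 2)).
  rewrite <- pow5E. change (pow x 5) with (op x (pow x 4)).
  rewrite pow4_pow2, (pow2E (pow x 2)), <- jordan_mul_left.
  rewrite (pow2_mul_inv x a xa). apply mulC.
Qed.

Lemma pow4_mul_pow2_inv x a : op x a = e -> op (pow x 4) (pow a 2) = pow x 2.
Proof.
  intro xa. apply (mulI (pow x 2)).
  rewrite pow4_pow2, (pow2E (pow x 2)), <- jordan_mul_left.
  now rewrite (pow2_mul_pow2_inv x a xa), mul1r.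
Qed.

Lemma pow3_mul_pow2_inv x a : op x a = e -> op (pow x 3) (pow a 2) = x.
Proof.
  intro xa.
  rewrite mulC, <- (pow4_mul_inv x a xa), (mulC (pow x 4) a).
  rewrite (pow2E a), jordan_mul_left, <- (pow2E a), (mulC (pow a 2) (pow x 4)).
  rewrite (pow4_mul_pow2_inv x a xa), (mulC a (pow x 2)).
  exact (pow2_mul_inv x a xa).
Qed.

Lemma pow3_mul_inv x a : op x a = e -> op (pow x 3) a = pow x 2.
Proof.
  intro xa.
  apply (mulI (pow a 2)).
  rewrite (mulC (pow a 2) (pow x 2)), (pow2_mul_pow2_inv x a xa).
  rewrite (mulC (pow x 3) a), (pow2E a), jordan_mul_left, <- (pow2E a).
  rewrite (mulC (pow a 2) (pow x 3)), (pow3_mul_pow2_inv x a xa).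
  now rewrite mulC.
Qed.

Lemma pow4_mul_pow3_inv x a : op x a = e -> op (pow x 4) (pow a 3) = x.
Proof.
  intro xa. assert (ax : op a x = e) by now rewrite mulC.
  apply (mulI (pow x 2)).
  rewrite pow4_pow2, (pow2E (pow x 2)), <- jordan_mul_left.
  rewrite (mulC (pow x 2) (pow a 3)), (pow3_mul_pow2_inv a x ax).
  rewrite <- (pow2E (pow x 2)), <- pow4_pow2, (pow4_mul_inv x a xa).
  apply mulC.
Qed.

Lemma inv_pow2_mul x a z :
  op x a = e -> op (pow x 2) z = e -> op z x = a.
Proof.
  intros xa x2z. assert (ax : op a x = e) by now rewrite mulC.
  assert (z_eq : z = pow a 2).
  { apply (mulI (pow x 2)). now rewrite x2z, (pow2_mul_pow2_inv x a xa). }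
  rewrite z_eq. exact (pow2_mul_inv a x ax).
Qed.

End JordanLoop.

Theorem lemma2p7 (Q : Type) (op : Q -> Q -> Q) (e : Q)
  (HQ : is_jordan_loop op e) (x xi : Q)
  (Hinv_r : op x xi = e) (Hinv_l : op xi x = e) :
  (* (i) (x^2)^{-1} x = x^{-1}, with (x^2)^{-1} the two-sided inverse of x^2 *)
  (forall z, op (lpow op e x 2) z = e -> op z (lpow op e x 2) = e -> op z x = xi) /\
  (* (ii) *) op (lpow op e x 3) (lpow op e xi 2) = x /\
  (* (iii) *) op (lpow op e x 3) xi = lpow op e x 2 /\
  (* (iv) *) op (lpow op e x 4) (lpow op e xi 3) = x /\
  (* (v) *) op (lpow op e x 6) (lpow op e xi 2) = lpow op e x 4 /\
  (* (vi) *) op (lpow op e x 6) (lpow op e xi 4) = lpow op e x 2.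
Proof.
  (* [Hinv_l] is redundant: it follows from [Hinv_r] by commutativity. *)
  pose proof (pow2_mul_pow2_inv _ _ _ HQ x xi Hinv_r) as x2_inv.
  split; [| split; [| split; [| split; [| split]]]].
  - intros z x2z _. exact (inv_pow2_mul _ _ _ HQ x xi z Hinv_r x2z).
  - exact (pow3_mul_pow2_inv _ _ _ HQ x xi Hinv_r).
  - exact (pow3_mul_inv _ _ _ HQ x xi Hinv_r).
  - exact (pow4_mul_pow3_inv _ _ _ HQ x xi Hinv_r).
  - rewrite (pow6_pow2 _ _ _ HQ), (pow4_pow2 _ _ _ HQ x).
    exact (pow3_mul_inv _ _ _ HQ _ _ x2_inv).
  - rewrite (pow6_pow2 _ _ _ HQ), (pow4_pow2 _ _ _ HQ xi).
    exact (pow3_mul_pow2_inv _ _ _ HQ _ _ x2_inv).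
Qed.
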